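(* Let $(a_0,\ldots,a_n)$ be a finite sequence of positive integers. For every $\varepsilon>0$ there is $m_0>0$ such that for every integer $m\ge m_0$ and every positive integer $N$, $$\Phi(\beta^{N+1})-\Phi(\beta^N)<\varepsilon.$$
   Context: For positive integers $d_0,d_1,\ldots$, $[d_0,d_1,d_2,\ldots]$ denotes the continued fraction $\cfrac{1}{d_0+\cfrac{1}{d_1+\cfrac{1}{d_2+\cdots}}}$, and for $\beta=[d_0,d_1,\ldots]$ we write $\alpha_j(\beta)=[d_j,d_{j+1},\ldots]$. $\Phi(\beta)=\sum_{k\ge 0}\alpha_0(\beta)\cdots\alpha_{k-1}(\beta)\log\frac{1}{\alpha_k(\beta)}$ is the Yoccoz Brjuno function. For integers $m\ge1$, $N\ge1$, $\beta^N$ is the number whose digits (indexed from $0$) are $a_0,\ldots,a_n$ in positions $0,\ldots,n$, $N$ in position $n+m$, and $1$ in all other positions. *)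

From Stdlib Require Import Reals.
From Coquelicot Require Import Coquelicot.
Open Scope R_scope.

(* A digit sequence d : nat -> nat (entries intended positive).
   cf_trunc d k = [d_0, ..., d_{k-1}] (the k-th convergent, with cf_trunc d 0 = 0). *)
Fixpoint cf_trunc (d : nat -> nat) (k : nat) : R :=
  match k with
  | O => 0
  | S k' => / (INR (d O) + cf_trunc (fun i => d (S i)) k')
  end.

Definition cf (d : nat -> nat) : R := real (Lim_seq (fun k => cf_trunc d k)).

Definition alpha (d : nat -> nat) (j : nat) : R := cf (fun i => d (i + j)%nat).

Fixpoint alpha_prod (d : nat -> nat) (k : nat) : R :=
  match k with
  | O => 1
  | S k' => alpha_prod d k' * alpha d k'
  end.

(* Yoccoz Brjuno function, as a function of the digit sequence of beta:
   Phi(beta) = sum_{k>=0} alpha_0 ... alpha_{k-1} log (1/alpha_k). *)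
Definition Phi (d : nat -> nat) : R :=
  Series (fun k => alpha_prod d k * ln (/ alpha d k)).

(* Digits of beta^N: a_0..a_n in positions 0..n, N in position n+m, 1 elsewhere. *)
Definition beta_digits (a : nat -> nat) (n m N : nat) : nat -> nat :=
  fun i => if Nat.leb i n then a i
           else if Nat.eqb i (n + m) then N else 1%nat.

From Stdlib Require Import Reals Lra Lia FunctionalExtensionality.
From Coquelicot Require Import Coquelicot.
Open Scope R_scope.

(* Let x_j, y_j be the numbers alpha_j of beta^N and beta^(N+1), and B_j, B'_j the values of
   Phi on their tails from position j, so that B_j = ln (1/x_j) + x_j B_(j+1).  The two digit
   sequences differ only at p = n + m, where |x_p - y_p| <= 1/(N+1) and |B_p - B'_p| is bounded
   independently of N.  Going down from p, |x_j - y_j| = x_j y_j |x_(j+1) - y_(j+1)|; along the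
   digits 1 we have x_j, y_j in [1/2, 2/3], so the weighted distance |B_j - B'_j| + W |x_j - y_j|
   shrinks by a factor 2/3 at each step, while the first n + 1 digits enlarge it by a factor
   depending only on n and max a_i.  Hence the difference is O((2/3)^m) uniformly in N. *)

Lemma nat_down_ind_range (Q : nat -> Prop) (lo hi : nat) :
  Q hi -> (forall j, (lo <= j < hi)%nat -> Q (S j) -> Q j) ->
  forall j, (lo <= j <= hi)%nat -> Q j.
Proof.
  intros Hhi Hstep.
  assert (H : forall k j, (j + k = hi)%nat -> (lo <= j)%nat -> Q j).
  { induction k as [|k IH]; intros j Hj Hlo.
    - replace j with hi by lia. exact Hhi.
    - apply Hstep; [lia|]. apply IH; lia. }
  intros j Hj. apply (H (hi - j)%nat); lia.
Qed.

Lemma nat_down_ind (Q : nat -> Prop) (P : nat) :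
  (forall j, (P < j)%nat -> Q j) -> (forall j, Q (S j) -> Q j) -> forall j, Q j.
Proof.
  intros Hbase Hstep j.
  apply (nat_down_ind_range Q 0 (S (P + j))); [apply Hbase; lia | intros i _; apply Hstep | lia].
Qed.

Lemma le_down_mono (f : nat -> R) (hi : nat) :
  (forall j, (j < hi)%nat -> f j <= f (S j)) -> forall j, (j <= hi)%nat -> f j <= f hi.
Proof.
  intros H j Hj. apply (nat_down_ind_range (fun j => f j <= f hi) 0 hi); [lra| |lia].
  intros i Hi IH. specialize (H i ltac:(lia)). lra.
Qed.

Lemma le_down_sum (f : nat -> R) (K : R) (hi : nat) :
  (forall j, (j < hi)%nat -> f j <= f (S j) + K) ->
  forall j, (j <= hi)%nat -> f j <= f hi + INR (hi - j) * K.
Proof.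
  intros H j Hj. apply (nat_down_ind_range (fun j => f j <= f hi + INR (hi - j) * K) 0 hi); [| |lia].
  - rewrite Nat.sub_diag. simpl. lra.
  - intros i Hi IH. replace (hi - i)%nat with (S (hi - S i)) by lia. rewrite S_INR.
    specialize (H i ltac:(lia)). lra.
Qed.

Lemma le_down_geom (f : nat -> R) (r : R) (lo hi : nat) :
  0 <= r -> (lo <= hi)%nat -> (forall j, (lo <= j < hi)%nat -> f j <= r * f (S j)) ->
  f lo <= r ^ (hi - lo) * f hi.
Proof.
  intros Hr Hlo H.
  apply (nat_down_ind_range (fun j => f j <= r ^ (hi - j) * f hi) lo hi); [| |lia].
  - rewrite Nat.sub_diag. simpl. lra.
  - intros j Hj IH. replace (hi - j)%nat with (S (hi - S j)) by lia. simpl.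
    rewrite Rmult_assoc. eapply Rle_trans; [apply H; lia|]. apply Rmult_le_compat_l; assumption.
Qed.

Lemma ln_le_sub1 z : 0 < z -> ln z <= z - 1.
Proof. intros Hz. pose proof (exp_ineq1_le (ln z)) as H. rewrite exp_ln in H by exact Hz. lra. Qed.

Lemma ln_sub_le x y : 0 < x -> 0 < y -> ln x - ln y <= (x - y) / y.
Proof.
  intros Hx Hy. rewrite <- ln_div by assumption.
  replace ((x - y) / y) with (x / y - 1) by (field; lra).
  apply ln_le_sub1, Rdiv_lt_0_compat; assumption.
Qed.

Lemma Rabs_ln_sub_le s x y : 0 < s -> s <= x -> s <= y -> Rabs (ln x - ln y) <= Rabs (x - y) / s.
Proof.
  intros Hs Hx Hy.
  assert (H : forall u v, s <= u -> s <= v -> ln u - ln v <= Rabs (u - v) / s).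
  { intros u v Hu Hv. eapply Rle_trans; [apply ln_sub_le; lra|].
    assert (/ v <= / s) by (apply Rinv_le_contravar; lra).
    assert (0 < / v) by (apply Rinv_0_lt_compat; lra).
    pose proof (Rle_abs (u - v)). pose proof (Rabs_pos (u - v)).
    unfold Rdiv. nra. }
  pose proof (H x y Hx Hy). pose proof (H y x Hy Hx) as Hyx. rewrite Rabs_minus_sym in Hyx.
  apply Rabs_le. lra.
Qed.

Lemma brjuno_step_abs_le x b : 0 < x <= 1 -> Rabs (ln (/ x) + x * b) <= (/ x - 1) + x * Rabs b.
Proof.
  intros Hx.
  assert (Hinv : 1 <= / x) by (rewrite <- Rinv_1; apply Rinv_le_contravar; lra).
  assert (0 <= ln (/ x)) by (rewrite <- ln_1; apply ln_le; lra).
  pose proof (ln_le_sub1 (/ x) ltac:(lra)).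
  eapply Rle_trans; [apply Rabs_triang|].
  rewrite Rabs_mult, (Rabs_pos_eq x), (Rabs_pos_eq (ln _)) by lra. lra.
Qed.

Lemma brjuno_step_dist_le s x y b b' : 0 < s -> s <= x -> s <= y ->
  Rabs ((ln (/ y) + y * b') - (ln (/ x) + x * b))
  <= Rabs (x - y) / s + Rabs (x - y) * Rabs b + y * Rabs (b' - b).
Proof.
  intros Hs Hx Hy. rewrite !ln_Rinv by lra.
  replace (- ln y + y * b' - (- ln x + x * b))
    with ((ln x - ln y) + ((y - x) * b + y * (b' - b))) by ring.
  pose proof (Rabs_ln_sub_le s x y Hs Hx Hy).
  eapply Rle_trans; [apply Rabs_triang|].
  eapply Rle_trans; [apply Rplus_le_compat_l, Rabs_triang|].
  rewrite !Rabs_mult, (Rabs_pos_eq y), (Rabs_minus_sym y x) by lra. lra.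
Qed.

Definition gold : R := (sqrt 5 - 1) / 2.

Lemma gold_bounds : 1/2 < gold < 1.
Proof.
  unfold gold. pose proof (sqrt_sqrt 5 ltac:(lra)). pose proof (sqrt_pos 5). nra.
Qed.

Lemma gold_fixpoint : gold = / (1 + gold).
Proof.
  assert (Hsq : gold * gold + gold = 1).
  { unfold gold. pose proof (sqrt_sqrt 5 ltac:(lra)). nra. }
  pose proof gold_bounds. field_simplify_eq; lra.
Qed.

Lemma cf_trunc_ones_nonneg k : 0 <= cf_trunc (fun _ => 1%nat) k.
Proof.
  induction k; simpl; [lra | apply Rlt_le, Rinv_0_lt_compat; lra].
Qed.

Lemma cf_trunc_ones_err k : Rabs (cf_trunc (fun _ => 1%nat) k - gold) <= gold ^ S k.
Proof.
  pose proof gold_bounds as Hg.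
  induction k as [|k IH]; simpl cf_trunc.
  - rewrite Rabs_left1; simpl; lra.
  - pose proof (cf_trunc_ones_nonneg k) as Ht.
    set (t := cf_trunc (fun _ => 1%nat) k) in *.
    assert (E : / (1 + t) - gold = (gold - t) * (gold * / (1 + t))).
    { rewrite gold_fixpoint at 1 3. field; lra. }
    assert (Hinv : 0 < / (1 + t) <= 1).
    { split; [apply Rinv_0_lt_compat; lra|]. rewrite <- Rinv_1. apply Rinv_le_contravar; lra. }
    rewrite E, Rabs_mult, Rabs_minus_sym, (Rabs_pos_eq (gold * _)) by (apply Rmult_le_pos; lra).
    simpl in IH |- *. pose proof (Rabs_pos (t - gold)).
    assert (Rabs (t - gold) * (gold * / (1 + t)) <= Rabs (t - gold) * gold)
      by (apply Rmult_le_compat_l; nra).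
    nra.
Qed.

Lemma is_lim_cf_trunc_ones : is_lim_seq (cf_trunc (fun _ => 1%nat)) gold.
Proof.
  pose proof gold_bounds as Hg.
  assert (Hgeom : is_lim_seq (fun k => gold ^ S k) 0).
  { apply (is_lim_seq_incr_1 (fun k => gold ^ k)), is_lim_seq_geom. rewrite Rabs_pos_eq; lra. }
  assert (Herr : is_lim_seq (fun k => cf_trunc (fun _ => 1%nat) k - gold) 0).
  { apply is_lim_seq_abs_0.
    apply (is_lim_seq_le_le (fun _ => 0) _ (fun k => gold ^ S k)); [|apply is_lim_seq_const|exact Hgeom].
    intros k; split; [apply Rabs_pos | apply cf_trunc_ones_err]. }
  replace (Finite gold) with (Rbar_plus 0 gold) by (simpl; f_equal; ring).
  eapply is_lim_seq_ext; [|apply (is_lim_seq_plus _ _ _ _ _ Herr (is_lim_seq_const gold)); reflexivity].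
  intros k; simpl; ring.
Qed.

Lemma cf_eq (d : nat -> nat) (L : R) : is_lim_seq (cf_trunc d) L -> cf d = L.
Proof. intros H. unfold cf. rewrite (is_lim_seq_unique (fun k => cf_trunc d k) L H). reflexivity. Qed.

Lemma tail_shift (d : nat -> nat) (j : nat) :
  (fun i => d (S (i + j))) = (fun i => d (i + S j)%nat).
Proof. apply functional_extensionality; intros i; f_equal; lia. Qed.

Lemma tail_0 (d : nat -> nat) : (fun i => d (i + 0)%nat) = d.
Proof. apply functional_extensionality; intros i. f_equal; lia. Qed.

Lemma alpha_tail (d : nat -> nat) (j k : nat) : alpha (fun i => d (i + j)%nat) k = alpha d (k + j).
Proof. unfold alpha. f_equal. apply functional_extensionality; intros i. f_equal; lia. Qed.

Lemma is_lim_cf_trunc_tail_cons (d : nat -> nat) (j : nat) (L : R) :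
  (1 <= d j)%nat -> 0 <= L -> is_lim_seq (cf_trunc (fun i => d (i + S j)%nat)) L ->
  is_lim_seq (cf_trunc (fun i => d (i + j)%nat)) (/ (INR (d j) + L)).
Proof.
  intros Hd HL Hlim. apply (le_INR 1) in Hd.
  apply is_lim_seq_incr_1. simpl cf_trunc. rewrite tail_shift.
  apply (is_lim_seq_inv _ (INR (d j) + L)); [|intros E; injection E; simpl in Hd; lra].
  apply (is_lim_seq_plus' (fun _ => INR (d j))); [apply is_lim_seq_const | exact Hlim].
Qed.

Definition brjuno_term (d : nat -> nat) (k : nat) : R := alpha_prod d k * ln (/ alpha d k).

Lemma alpha_shift (d : nat -> nat) (k : nat) : alpha (fun i => d (S i)) k = alpha d (S k).
Proof. unfold alpha. f_equal. apply functional_extensionality; intros i. f_equal; lia. Qed.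

Lemma alpha_prod_shift (d : nat -> nat) (k : nat) :
  alpha_prod d (S k) = alpha d 0 * alpha_prod (fun i => d (S i)) k.
Proof.
  induction k as [|k IH]; [simpl; ring|].
  change (alpha_prod d (S (S k))) with (alpha_prod d (S k) * alpha d (S k)).
  rewrite IH. simpl. rewrite alpha_shift. ring.
Qed.

Lemma brjuno_term_shift (d : nat -> nat) (k : nat) :
  brjuno_term d (S k) = alpha d 0 * brjuno_term (fun i => d (S i)) k.
Proof. unfold brjuno_term. rewrite alpha_prod_shift, alpha_shift. ring. Qed.

Lemma Phi_cons (d : nat -> nat) :
  ex_series (brjuno_term (fun i => d (S i))) ->
  ex_series (brjuno_term d) /\
  Phi d = ln (/ alpha d 0) + alpha d 0 * Phi (fun i => d (S i)).
Proof.
  intros [l Hl].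
  assert (Hs : is_series (fun k => brjuno_term d (S k)) (l * alpha d 0)).
  { eapply is_series_ext; [|apply is_series_scal_r, Hl].
    intros k; simpl; rewrite brjuno_term_shift; ring. }
  assert (Hex : ex_series (brjuno_term d)) by (apply ex_series_incr_1; eexists; exact Hs).
  split; [exact Hex|].
  unfold Phi. fold (brjuno_term d) (brjuno_term (fun i => d (S i))). rewrite Series_incr_1 by exact Hex.
  rewrite (is_series_unique _ _ Hs), (is_series_unique _ _ Hl).
  unfold brjuno_term; simpl. ring.
Qed.

Lemma ex_series_brjuno_ones : ex_series (brjuno_term (fun _ => 1%nat)).
Proof.
  pose proof gold_bounds as Hg.
  assert (Ha : forall k, alpha (fun _ => 1%nat) k = gold) by (intros k; apply cf_eq, is_lim_cf_trunc_ones).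
  eexists. eapply is_series_ext;
    [|apply (is_series_scal_r (ln (/ gold)) (fun k => gold ^ k)), is_series_geom; rewrite Rabs_pos_eq; lra].
  intros k. unfold brjuno_term. rewrite Ha. f_equal.
  induction k as [|k IH]; simpl; [reflexivity|]. rewrite IH, Ha. ring.
Qed.

Lemma Phi_tail_cons (d : nat -> nat) (j : nat) :
  ex_series (brjuno_term (fun i => d (i + S j)%nat)) ->
  ex_series (brjuno_term (fun i => d (i + j)%nat)) /\
  Phi (fun i => d (i + j)%nat) = ln (/ alpha d j) + alpha d j * Phi (fun i => d (i + S j)%nat).
Proof.
  rewrite <- tail_shift. intros H.
  pose proof (Phi_cons (fun i => d (i + j)%nat) H) as Hc.
  rewrite alpha_tail in Hc. exact Hc.
Qed.

Section EventuallyOne.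
Variables (d : nat -> nat) (P : nat).
Hypothesis d_pos : forall i, (1 <= d i)%nat.
Hypothesis d_one : forall i, (P < i)%nat -> d i = 1%nat.

Lemma tail_beyond j : (P < j)%nat -> (fun i => d (i + j)%nat) = (fun _ => 1%nat).
Proof. intros Hj. apply functional_extensionality; intros i. apply d_one; lia. Qed.

Lemma alpha_beyond j : (P < j)%nat -> alpha d j = gold.
Proof. intros Hj. unfold alpha. rewrite tail_beyond by exact Hj. apply cf_eq, is_lim_cf_trunc_ones. Qed.

Lemma is_lim_alpha j :
  is_lim_seq (cf_trunc (fun i => d (i + j)%nat)) (alpha d j) /\ 0 < alpha d j <= 1.
Proof.
  revert j; apply (nat_down_ind _ P).
  - intros j Hj. pose proof gold_bounds.
    rewrite alpha_beyond, tail_beyond by exact Hj. split; [exact is_lim_cf_trunc_ones | lra].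
  - intros j [Hlim Hpos].
    pose proof (is_lim_cf_trunc_tail_cons d j (alpha d (S j)) (d_pos j) ltac:(lra) Hlim) as Hc.
    assert (Hd : 1 <= INR (d j)) by apply (le_INR 1), d_pos.
    replace (alpha d j) with (/ (INR (d j) + alpha d (S j))) by (symmetry; exact (cf_eq _ _ Hc)).
    split; [exact Hc | split].
    + apply Rinv_0_lt_compat; lra.
    + rewrite <- Rinv_1. apply Rinv_le_contravar; lra.
Qed.

Lemma alpha_bounds j : 0 < alpha d j <= 1.
Proof. apply is_lim_alpha. Qed.

Lemma alpha_rec j : alpha d j = / (INR (d j) + alpha d (S j)).
Proof.
  destruct (is_lim_alpha (S j)) as [Hlim Hpos].
  apply cf_eq, is_lim_cf_trunc_tail_cons; [apply d_pos | lra | exact Hlim].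
Qed.

Lemma ex_series_brjuno_tail j : ex_series (brjuno_term (fun i => d (i + j)%nat)).
Proof.
  revert j; apply (nat_down_ind _ P).
  - intros j Hj. rewrite (tail_beyond j Hj). exact ex_series_brjuno_ones.
  - intros j H. apply Phi_tail_cons, H.
Qed.

Lemma Phi_tail_rec j :
  Phi (fun i => d (i + j)%nat) = ln (/ alpha d j) + alpha d j * Phi (fun i => d (i + S j)%nat).
Proof. apply Phi_tail_cons, ex_series_brjuno_tail. Qed.

End EventuallyOne.

Section Comparison.
Variables (n m : nat) (N g A C : R) (c x y B B' : nat -> R).
Let p := (n + m)%nat.
Let q := (n + m - 1)%nat.

Hypothesis m_ge2 : (2 <= m)%nat.
Hypothesis N_ge1 : 1 <= N.
Hypothesis g_bounds : 0 <= g <= 1.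
Hypothesis c_ge1 : forall j, (j < p)%nat -> 1 <= c j.
Hypothesis c_le : forall j, (j <= n)%nat -> c j <= A.
Hypothesis c_one : forall j, (n < j < p)%nat -> c j = 1.
Hypothesis x_rec : forall j, (j < p)%nat -> x j = / (c j + x (S j)).
Hypothesis y_rec : forall j, (j < p)%nat -> y j = / (c j + y (S j)).
Hypothesis x_top : x p = / (N + g).
Hypothesis y_top : y p = / (N + 1 + g).
Hypothesis x_bounds : forall j, 0 < x j <= 1.
Hypothesis y_bounds : forall j, 0 < y j <= 1.
Hypothesis B_rec : forall j, B j = ln (/ x j) + x j * B (S j).
Hypothesis B'_rec : forall j, B' j = ln (/ y j) + y j * B' (S j).
Hypothesis B_top : B (S p) = C.
Hypothesis B'_top : B' (S p) = C.

Let dx j := Rabs (x j - y j).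
Let dB j := Rabs (B' j - B j).
(* [U >= 3] makes [1 + 2/3 U <= U], so that [U] bounds [|B j|] along the digits 1. *)
Let U := 3 + N + Rabs C.
Let W := 2 * (2 + U).

Lemma dx_rec j : (j < p)%nat -> dx j = x j * y j * dx (S j).
Proof.
  intros Hj. unfold dx. pose proof (c_ge1 j Hj).
  pose proof (x_bounds j); pose proof (y_bounds j); pose proof (x_bounds (S j)); pose proof (y_bounds (S j)).
  assert (E : x j - y j = x j * y j * (y (S j) - x (S j))).
  { rewrite (x_rec j Hj), (y_rec j Hj). field; lra. }
  rewrite E, !Rabs_mult, (Rabs_minus_sym (y (S j))), (Rabs_pos_eq (x j)), (Rabs_pos_eq (y j)) by lra.
  reflexivity.
Qed.

Lemma dx_le_S j : (j < p)%nat -> dx j <= dx (S j).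
Proof.
  intros Hj. rewrite (dx_rec j Hj). pose proof (x_bounds j); pose proof (y_bounds j).
  assert (0 <= dx (S j)) by apply Rabs_pos.
  assert (x j * y j <= 1) by nra. nra.
Qed.

Lemma xy_ones_bounds j : (n < j < p)%nat -> 1/2 <= x j /\ 1/2 <= y j.
Proof.
  intros Hj. rewrite (x_rec j ltac:(lia)), (y_rec j ltac:(lia)), (c_one j Hj).
  pose proof (x_bounds (S j)); pose proof (y_bounds (S j)).
  replace (1/2) with (/ (1 + 1)) by field.
  split; apply Rinv_le_contravar; lra.
Qed.

Lemma xy_ones_inner_bounds j : (n < j)%nat -> (S j < p)%nat -> x j <= 2/3 /\ y j <= 2/3.
Proof.
  intros H1 H2. destruct (xy_ones_bounds (S j) ltac:(lia)).
  rewrite (x_rec j ltac:(lia)), (y_rec j ltac:(lia)), (c_one j ltac:(lia)).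
  replace (2/3) with (/ (1 + 1/2)) by field.
  split; apply Rinv_le_contravar; lra.
Qed.

Lemma dB_step j s : 0 < s -> s <= x j -> s <= y j ->
  dB j <= dx j / s + dx j * Rabs (B (S j)) + y j * dB (S j).
Proof. intros. unfold dB, dx. rewrite (B_rec j), (B'_rec j). apply brjuno_step_dist_le; assumption. Qed.

Lemma absB_step j : Rabs (B j) <= (/ x j - 1) + x j * Rabs (B (S j)).
Proof. rewrite B_rec. apply brjuno_step_abs_le, x_bounds. Qed.

Lemma dx_top : dx p = x p * y p.
Proof.
  unfold dx. rewrite x_top, y_top.
  replace (/ (N + g) - / (N + 1 + g)) with (/ (N + g) * / (N + 1 + g)) by (field; lra).
  apply Rabs_pos_eq, Rmult_le_pos; apply Rlt_le, Rinv_0_lt_compat; lra.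
Qed.

Lemma dx_top_le : (N + 1) * dx p <= 1.
Proof.
  rewrite dx_top, x_top, y_top.
  replace ((N + 1) * (/ (N + g) * / (N + 1 + g))) with ((N + 1) / ((N + g) * (N + 1 + g))) by (field; lra).
  apply Rle_div_l; nra.
Qed.

Lemma absB_top : Rabs (B p) <= N + Rabs C.
Proof.
  eapply Rle_trans; [apply absB_step|]. rewrite B_top, x_top, Rinv_inv.
  assert (/ (N + g) <= 1) by (rewrite <- Rinv_1; apply Rinv_le_contravar; lra).
  assert (0 < / (N + g)) by (apply Rinv_0_lt_compat; lra).
  pose proof (Rabs_pos C). nra.
Qed.

Lemma dB_top : dB p <= 1 + Rabs C.
Proof.
  pose proof (y_bounds p) as Hy. pose proof dx_top_le. pose proof (Rabs_pos C).
  assert (Hyx : y p <= x p).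
  { rewrite x_top, y_top. apply Rinv_le_contravar; lra. }
  eapply Rle_trans; [apply (dB_step p (y p)); lra|].
  unfold dB. rewrite B_top, B'_top, Rminus_diag, Rabs_R0, Rmult_0_r, Rplus_0_r.
  replace (dx p / y p) with (x p) by (rewrite dx_top; field; lra).
  assert (0 <= dx p) by apply Rabs_pos.
  pose proof (x_bounds p). nra.
Qed.

Lemma q_between : (n < q)%nat /\ S q = p.
Proof. unfold p, q. lia. Qed.

Lemma absB_below_top : Rabs (B q) <= U.
Proof.
  destruct q_between as [Hnq Hq]. destruct (xy_ones_bounds q ltac:(lia)) as [Hx _].
  pose proof (x_bounds q). pose proof absB_top. pose proof (Rabs_pos (B p)).
  assert (/ x q <= 2) by (replace 2 with (/ (1/2)) by field; apply Rinv_le_contravar; lra).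
  eapply Rle_trans; [apply absB_step|]. rewrite Hq. unfold U. nra.
Qed.

Lemma potential_below_top : dB q + W * dx q <= 16 + 4 * Rabs C.
Proof.
  destruct q_between as [Hnq Hq]. destruct (xy_ones_bounds q ltac:(lia)) as [Hx Hy].
  pose proof (dx_le_S q ltac:(lia)) as Hdx. rewrite Hq in Hdx.
  pose proof dx_top_le. pose proof dB_top. pose proof absB_top.
  pose proof (Rabs_pos C).
  assert (0 <= dx q) by apply Rabs_pos. assert (0 <= dB p) by apply Rabs_pos.
  assert (Hd : dB q <= dx q / (1/2) + dx q * Rabs (B p) + y q * dB p).
  { rewrite <- Hq. apply dB_step; lra. }
  assert (dx q * Rabs (B p) <= dx p * (N + Rabs C)) by (apply Rmult_le_compat; auto; apply Rabs_pos).
  assert (y q * dB p <= dB p) by (pose proof (y_bounds q); nra).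
  replace (dx q / (1/2)) with (2 * dx q) in Hd by field.
  assert (dx p <= 1) by nra.
  assert (Rabs C * dx q <= Rabs C) by nra.
  assert (N * dx q <= 1) by nra.
  unfold W, U. nra.
Qed.

Lemma absB_ones j : (n < j <= q)%nat -> Rabs (B j) <= U.
Proof.
  apply (nat_down_ind_range (fun j => Rabs (B j) <= U)); [exact absB_below_top|].
  intros i Hi IH. destruct q_between as [_ Hq].
  destruct (xy_ones_bounds i ltac:(lia)) as [Hx _]. destruct (xy_ones_inner_bounds i ltac:(lia) ltac:(lia)) as [Hx' _].
  assert (/ x i <= 2) by (replace 2 with (/ (1/2)) by field; apply Rinv_le_contravar; lra).
  pose proof (Rabs_pos (B (S i))).
  eapply Rle_trans; [apply absB_step|]. unfold U in *. pose proof (Rabs_pos C). nra.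
Qed.

(* With [W = 2 (2 + U)], the factor 4/9 gained on [dx] absorbs the [dx] terms of [dB_step]. *)
Lemma potential_step j : (n < j < q)%nat ->
  dB j + W * dx j <= 2/3 * (dB (S j) + W * dx (S j)).
Proof.
  intros Hj. destruct q_between as [_ Hq].
  destruct (xy_ones_bounds j ltac:(lia)) as [Hx Hy].
  destruct (xy_ones_inner_bounds j ltac:(lia) ltac:(lia)) as [Hx' Hy'].
  pose proof (absB_ones (S j) ltac:(lia)) as HB.
  assert (Hdx : dx j <= 4/9 * dx (S j)).
  { rewrite (dx_rec j ltac:(lia)). assert (0 <= dx (S j)) by apply Rabs_pos.
    assert (x j * y j <= 4/9) by nra. nra. }
  assert (Hd : dB j <= dx j / (1/2) + dx j * Rabs (B (S j)) + y j * dB (S j)) by (apply dB_step; lra).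
  replace (dx j / (1/2)) with (2 * dx j) in Hd by field.
  assert (0 <= dx j) by apply Rabs_pos. assert (0 <= dB (S j)) by apply Rabs_pos.
  assert (dx j * Rabs (B (S j)) <= dx j * U) by (apply Rmult_le_compat_l; assumption).
  assert (0 <= U) by (unfold U; pose proof (Rabs_pos C); lra).
  assert (y j * dB (S j) <= 2/3 * dB (S j)) by nra.
  assert (U * dx j <= U * (4/9 * dx (S j))) by (apply Rmult_le_compat_l; lra).
  unfold W. lra.
Qed.

Lemma potential_ones : dB (S n) + W * dx (S n) <= (2/3) ^ (m - 2) * (16 + 4 * Rabs C).
Proof.
  destruct q_between as [Hnq _].
  replace (m - 2)%nat with (q - S n)%nat by (unfold q; lia).
  assert (0 <= (2/3) ^ (q - S n)) by (apply pow_le; lra).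
  eapply Rle_trans; [apply (le_down_geom (fun j => dB j + W * dx j) (2/3) (S n) q); [lra | lia | exact potential_step]|].
  apply Rmult_le_compat_l; [assumption | exact potential_below_top].
Qed.

Lemma A_ge1 : 1 <= A.
Proof. apply (Rle_trans _ (c 0)); [apply c_ge1; unfold p; lia | apply c_le; lia]. Qed.

Lemma xy_prefix_lower j : (j <= n)%nat -> / (A + 1) <= x j /\ / (A + 1) <= y j.
Proof.
  intros Hj. rewrite (x_rec j ltac:(unfold p; lia)), (y_rec j ltac:(unfold p; lia)).
  pose proof (c_ge1 j ltac:(unfold p; lia)). pose proof (c_le j Hj).
  pose proof (x_bounds (S j)); pose proof (y_bounds (S j)).
  split; apply Rinv_le_contravar; lra.
Qed.

Lemma absB_prefix j : (j <= S n)%nat -> Rabs (B j) <= U + INR (S n) * A.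
Proof.
  intros Hj. pose proof A_ge1.
  assert (Hle : INR (S n - j) <= INR (S n)) by (apply le_INR; lia).
  assert (HBn : Rabs (B (S n)) <= U) by (apply absB_ones; destruct q_between; lia).
  eapply Rle_trans; [apply (le_down_sum (fun j => Rabs (B j)) A (S n)); [|exact Hj]|nra].
  intros i Hi. eapply Rle_trans; [apply absB_step|].
  rewrite (x_rec i ltac:(unfold p; lia)), Rinv_inv.
  pose proof (c_le i ltac:(lia)). pose proof (x_bounds (S i)). pose proof (x_bounds i).
  rewrite <- (x_rec i ltac:(unfold p; lia)). pose proof (Rabs_pos (B (S i))). nra.
Qed.

Lemma dB_prefix : dB 0 <= dB (S n) + INR (S n) * ((A + 1 + U + INR (S n) * A) * dx (S n)).
Proof.
  pose proof A_ge1.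
  assert (Hdx : forall j, (j <= S n)%nat -> dx j <= dx (S n)).
  { apply le_down_mono. intros j Hj. apply dx_le_S. unfold p; lia. }
  replace (INR (S n)) with (INR (S n - 0)) at 1 by (f_equal; lia).
  apply (le_down_sum dB); [|lia].
  intros j Hj. destruct (xy_prefix_lower j ltac:(lia)) as [Hx Hy].
  assert (0 < / (A + 1)) by (apply Rinv_0_lt_compat; lra).
  eapply Rle_trans; [apply (dB_step j (/ (A + 1))); assumption|].
  replace (dx j / / (A + 1)) with ((A + 1) * dx j) by (field; lra).
  pose proof (Hdx j ltac:(lia)). pose proof (absB_prefix (S j) ltac:(lia)).
  assert (0 <= dx j) by apply Rabs_pos. assert (0 <= dB (S j)) by apply Rabs_pos.
  assert (dx j * Rabs (B (S j)) <= dx (S n) * (U + INR (S n) * A))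
    by (apply Rmult_le_compat; [assumption | apply Rabs_pos | assumption | assumption]).
  pose proof (y_bounds j). nra.
Qed.

Lemma brjuno_diff_le :
  Rabs (B' 0 - B 0) <=
  (2/3) ^ (m - 2) * (16 + 4 * Rabs C) * (1 + INR (S n) * (INR (S n) + 1) * (A + 1)).
Proof.
  pose proof potential_ones as Hpot. pose proof dB_prefix as Hpre. pose proof A_ge1.
  set (s := INR (S n)) in *. assert (Hs : 1 <= s) by (unfold s; rewrite S_INR; pose proof (pos_INR n); lra).
  set (K := s * (s + 1) * (A + 1)). assert (HK : 0 <= K) by (unfold K; nra).
  assert (0 <= dx (S n)) by apply Rabs_pos. assert (0 <= dB (S n)) by apply Rabs_pos.
  assert (HU : 0 <= U) by (unfold U; pose proof (Rabs_pos C); lra).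
  assert (HV : A + 1 + U + s * A <= (s + 1) * (A + 1) * W).
  { assert (0 <= ((s + 1) * (A + 1) - 1) * U) by (apply Rmult_le_pos; nra).
    unfold W. nra. }
  assert (s * ((A + 1 + U + s * A) * dx (S n)) <= K * (W * dx (S n))).
  { unfold K. replace (s * (s + 1) * (A + 1) * (W * dx (S n))) with (s * ((s + 1) * (A + 1) * W * dx (S n))) by ring.
    apply Rmult_le_compat_l; [lra|]. apply Rmult_le_compat_r; assumption. }
  assert (0 <= W * dx (S n)) by (apply Rmult_le_pos; unfold W; lra).
  assert (0 <= K * dB (S n)) by (apply Rmult_le_pos; lra).
  assert (Hbound : dB 0 <= (1 + K) * (dB (S n) + W * dx (S n))) by lra.
  eapply Rle_trans; [exact Hbound|]. rewrite (Rmult_comm _ (1 + K)).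
  apply Rmult_le_compat_l; [lra | exact Hpot].
Qed.

End Comparison.

Section BetaDigits.
Variables (a : nat -> nat) (n m N : nat).

Local Ltac beta_digits_cases i :=
  unfold beta_digits; destruct (Nat.leb_spec i n), (Nat.eqb_spec i (n + m)); lia.

Lemma beta_digits_prefix i : (i <= n)%nat -> beta_digits a n m N i = a i.
Proof. intros; beta_digits_cases i. Qed.

Lemma beta_digits_top : (1 <= m)%nat -> beta_digits a n m N (n + m) = N.
Proof. intros; beta_digits_cases (n + m)%nat. Qed.

Lemma beta_digits_one i : (n < i)%nat -> i <> (n + m)%nat -> beta_digits a n m N i = 1%nat.
Proof. intros; beta_digits_cases i. Qed.

Lemma beta_digits_pos : (forall i, (i <= n)%nat -> (1 <= a i)%nat) -> (1 <= N)%nat ->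
  forall i, (1 <= beta_digits a n m N i)%nat.
Proof.
  intros ha HN i. unfold beta_digits.
  destruct (Nat.leb_spec i n), (Nat.eqb_spec i (n + m)); try lia; apply ha; lia.
Qed.

Lemma beta_digits_other N' i : i <> (n + m)%nat -> beta_digits a n m N i = beta_digits a n m N' i.
Proof. intros; beta_digits_cases i. Qed.

End BetaDigits.

Lemma Phi_beta_digits_diff_le (a : nat -> nat) (n m N A : nat) :
  (2 <= m)%nat -> (1 <= N)%nat -> (forall i, (i <= n)%nat -> (1 <= a i <= A)%nat) ->
  Rabs (Phi (beta_digits a n m (N + 1)) - Phi (beta_digits a n m N)) <=
  (2/3) ^ (m - 2) * (16 + 4 * Rabs (Phi (fun _ => 1%nat))) *
  (1 + INR (S n) * (INR (S n) + 1) * (INR A + 1)).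
Proof.
  intros Hm HN Ha.
  assert (ha : forall i, (i <= n)%nat -> (1 <= a i)%nat) by (intros i Hi; apply Ha, Hi).
  set (d := beta_digits a n m N). set (e := beta_digits a n m (N + 1)).
  pose proof (beta_digits_pos a n m N ha HN) as Hd1.
  pose proof (beta_digits_pos a n m (N + 1) ha ltac:(lia)) as He1.
  assert (Hd_one : forall i, (n + m < i)%nat -> d i = 1%nat) by (intros; apply beta_digits_one; lia).
  assert (He_one : forall i, (n + m < i)%nat -> e i = 1%nat) by (intros; apply beta_digits_one; lia).
  assert (Hed : forall j, (j < n + m)%nat -> e j = d j) by (intros; apply beta_digits_other; lia).
  pose proof gold_bounds.
  rewrite <- (tail_0 d), <- (tail_0 e).
  apply (brjuno_diff_le n m (INR N) gold (INR A) _ (fun j => INR (d j)) (alpha d) (alpha e)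
           (fun j => Phi (fun i => d (i + j)%nat)) (fun j => Phi (fun i => e (i + j)%nat))).
  - exact Hm.
  - apply (le_INR 1), HN.
  - lra.
  - intros j _. apply (le_INR 1), Hd1.
  - intros j Hj. apply le_INR. unfold d. rewrite beta_digits_prefix by exact Hj. apply Ha, Hj.
  - intros j Hj. unfold d. rewrite beta_digits_one by lia. reflexivity.
  - intros j _. apply (alpha_rec d (n + m) Hd1 Hd_one).
  - intros j Hj. rewrite <- (Hed j Hj). apply (alpha_rec e (n + m) He1 He_one).
  - rewrite (alpha_rec d (n + m) Hd1 Hd_one), (alpha_beyond d (n + m) Hd_one) by lia.
    unfold d. rewrite beta_digits_top by lia. reflexivity.
  - rewrite (alpha_rec e (n + m) He1 He_one), (alpha_beyond e (n + m) He_one) by lia.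
    unfold e. rewrite beta_digits_top, plus_INR by lia. reflexivity.
  - apply (alpha_bounds d (n + m) Hd1 Hd_one).
  - apply (alpha_bounds e (n + m) He1 He_one).
  - apply (Phi_tail_rec d (n + m) Hd_one).
  - apply (Phi_tail_rec e (n + m) He_one).
  - simpl. rewrite (tail_beyond d (n + m) Hd_one) by lia. reflexivity.
  - simpl. rewrite (tail_beyond e (n + m) He_one) by lia. reflexivity.
Qed.

Lemma prefix_bound (a : nat -> nat) (n : nat) : exists A, forall i, (i <= n)%nat -> (a i <= A)%nat.
Proof.
  induction n as [|n [A HA]].
  - exists (a 0%nat). intros i Hi. replace i with 0%nat by lia. lia.
  - exists (Nat.max A (a (S n))). intros i Hi.
    destruct (Nat.eq_dec i (S n)) as [->|]; [lia|]. specialize (HA i ltac:(lia)). lia.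
Qed.

Theorem mainTheorem9 (n : nat) (a : nat -> nat)
  (ha : forall i, (i <= n)%nat -> (1 <= a i)%nat) :
  forall eps : R, 0 < eps ->
  exists m0 : nat, (0 < m0)%nat /\
    forall m N : nat, (m0 <= m)%nat -> (1 <= N)%nat ->
      Phi (beta_digits a n m (N + 1)) - Phi (beta_digits a n m N) < eps.
Proof.
  intros eps Heps.
  destruct (prefix_bound a n) as [A HA].
  set (K := (16 + 4 * Rabs (Phi (fun _ => 1%nat))) * (1 + INR (S n) * (INR (S n) + 1) * (INR A + 1))).
  assert (HK : 0 < K).
  { pose proof (Rabs_pos (Phi (fun _ => 1%nat))). pose proof (pos_INR (S n)). pose proof (pos_INR A).
    unfold K. apply Rmult_lt_0_compat; [lra|]. nra. }
  destruct (pow_lt_1_zero (2/3) ltac:(rewrite Rabs_pos_eq; lra) (eps / K) ltac:(apply Rdiv_lt_0_compat; lra))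
    as [k Hk].
  exists (k + 2)%nat. split; [lia|]. intros m N Hm HN.
  pose proof (Phi_beta_digits_diff_le a n m N A ltac:(lia) HN ltac:(intros i Hi; split; auto)) as Hdiff.
  specialize (Hk (m - 2)%nat ltac:(lia)). rewrite Rabs_pos_eq in Hk by (apply pow_le; lra).
  apply Rlt_div_r in Hk; [|lra].
  rewrite Rmult_assoc in Hdiff. fold K in Hdiff.
  pose proof (Rle_abs (Phi (beta_digits a n m (N + 1)) - Phi (beta_digits a n m N))). lra.
Qed.
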